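(* Let $0<\gamma<1/3$. There are positive constants $c_1=c_1(\gamma)$ and $c_2=c_2(\gamma)$ such that for $\pi(N)(1+o(1))$ primes $p\le N$ (as $N\to\infty$) we have $$c_1N^{\gamma/2}\le\frac{1}{p}\sum_{x=0}^{p-1}\left|\sum_{n\le N^{\gamma}}e^{2\pi i\frac{x}{p}F_n}\right|\le c_2N^{\gamma/2}.$$
   Context: $\{F_n\}$ is the Fibonacci sequence: $F_1=F_2=1$, $F_{n+2}=F_{n+1}+F_n$ for $n\ge1$. $\pi(N)$ denotes the number of primes $p\le N$. *)

From Stdlib Require Import Reals Lra Lia ZArith Znumtheory List.
From Coquelicot Require Import Coquelicot.
Open Scope R_scope.

Fixpoint fib (n : nat) : nat :=
  match n with
  | O => O
  | S m => match m with
           | O => 1%nat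
           | S k => (fib m + fib k)%nat
           end
  end.

Definition e2pi (t : R) : C := (cos (2 * PI * t), sin (2 * PI * t)).

Definition isprime (p : nat) : bool :=
  if prime_dec (Z.of_nat p) then true else false.

Definition prime_pi (N : nat) : nat :=
  length (filter isprime (seq 0 (S N))).

(* The inner sum  sum_{1 <= n <= N^gamma} e(x F_n / p).  Since N^gamma <= N
   for N >= 1, the index n ranges over 1..N restricted to n <= N^gamma. *)
Definition fib_sum (gamma : R) (N p x : nat) : C :=
  fold_right Cplus 0%C
    (map (fun n => e2pi (INR x * INR (fib n) / INR p))
         (filter (fun n => if Rle_dec (INR n) (Rpower (INR N) gamma) then true else false)
                 (seq 1 N))).

Definition avg_abs (gamma : R) (N p : nat) : R :=
  / INR p * fold_right Rplus 0 (map (fun x => Cmod (fib_sum gamma N p x)) (seq 0 p)).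

Definition good (gamma c1 c2 : R) (N p : nat) : bool :=
  if Rle_dec (c1 * Rpower (INR N) (gamma / 2)) (avg_abs gamma N p) then
    if Rle_dec (avg_abs gamma N p) (c2 * Rpower (INR N) (gamma / 2)) then true else false
  else false.

Definition good_count (gamma c1 c2 : R) (N : nat) : nat :=
  length (filter (fun p => andb (isprime p) (good gamma c1 c2 N p)) (seq 0 (S N))).

(* Fix a prime p, let K = floor (N^gamma) and S(x) = sum_{n <= K} e(x F_n / p).
   Orthogonality of characters turns the second and fourth moments of |S(x)|
   over x mod p into the numbers of solutions of F_n = F_m and
   F_a + F_b = F_c + F_d modulo p.  Over the integers these equations have
   O(K) and O(K^2) solutions, because F_c <= v <= 2 F_c confines c to a window
   of three indices.  A prime adds solutions only if it divides one of the
   nonzero differences, which are at most 2^(K+1) and so have at most K + 1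
   prime factors; a Markov count shows that all but O(K^3) primes keep both
   moments of the integer size.  For those primes Cauchy-Schwarz bounds the
   mean of |S| by the square root of the second moment, and Hoelder's
   inequality (M_2^3 <= M_1^2 M_4) bounds it below by the same order, sqrt K.
   Finally K^3 <= N^(3 gamma) is o(N / log N), hence o(pi(N)) by Chebyshev's
   bound pi(N) >= N log 2 / (4 log N), which we derive from 2^n <= C(2n, n). *)

From Stdlib Require Import Reals Lra Lia Psatz ZArith Znumtheory List Bool.
From Coquelicot Require Import Coquelicot.
From mathcomp Require ssreflect ssrnat binomial prime bigop zify.

(** * Chebyshev's lower bound for pi(N) *)

Module Chebyshev.
Import ssreflect ssrfun ssrbool eqtype ssrnat seq div binomial prime bigop zify.
Local Open Scope nat_scope.

Lemma dvdn_Zdivide d n : d %| n <-> (Z.of_nat d | Z.of_nat n)%Z.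
Proof.
split; first by move/dvdnP=> [k ->]; exists (Z.of_nat k); lia.
move=> [z hz]; apply/dvdnP.
have [d0 | d0] := Z.eq_dec (Z.of_nat d) 0; first by exists 0; lia.
have z_ge0 : (0 <= z)%Z by nia.
by exists (Z.to_nat z); nia.
Qed.

Lemma primeE p : prime p = isprime p.
Proof.
rewrite /isprime; case: (prime_dec (Z.of_nat p)) => [/prime_alt [p_gt1 no_div] | not_prime].
  apply/primeP; split; first by lia.
  move=> d d_dvd; have /dvdn_Zdivide d_Zdvd := d_dvd.
  have d_gt0 : 0 < d by rewrite lt0n; apply/eqP => d0; move: d_dvd; rewrite d0 dvd0n => /eqP; lia.
  have d_le : d <= p by apply: dvdn_leq => //; lia.
  case: (d =P 1) => [//|d_neq1]; case: (d =P p) => [//|d_neqp] /=.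
  by exfalso; apply: (no_div (Z.of_nat d)) => //; lia.
apply/negbTE/negP => /primeP [p_gt1 divs]; apply: not_prime; apply/prime_alt.
split; first by lia.
move=> n n_bounds n_dvd; have n_ge0 : (0 <= n)%Z by lia.
have : Z.to_nat n %| p by apply/dvdn_Zdivide; rewrite Z2Nat.id.
by move/divs => /orP [] /eqP; lia.
Qed.

Lemma prime_piE N : prime_pi N = count prime (iota 0 N.+1).
Proof.
rewrite /prime_pi; elim: N.+1 0 => //= m IH k.
by rewrite -primeE; case: (prime k) => /=; rewrite IH.
Qed.

Lemma central_bin_ge_pow2 n : 2 ^ n <= 'C(n.*2, n).
Proof.
elim: n => [|n IH]; first by rewrite bin0.
rewrite doubleS binS binS expnS mul2n -addnn.
have le_bin : 'C(n.*2, n) <= 'C(n.*2.+1, n) by apply: leq_bin2l.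
by apply: leq_add; [apply: leq_trans IH _; rewrite leq_addl | apply: leq_trans IH le_bin].
Qed.

Lemma divn_double_le n q : 0 < q -> n.*2 %/ q <= (n %/ q).*2 + 1.
Proof.
move=> q_gt0.
have h1 : n < (n %/ q).+1 * q by rewrite -ltn_divLR.
have h2 : n.*2 %/ q < (n %/ q).*2.+2 by rewrite ltn_divLR //; nia.
lia.
Qed.

Lemma sum_leq_indicator t M : \sum_(1 <= k < M.+1) (k <= t) <= t.
Proof.
suff : \sum_(1 <= k < M.+1) (k <= t) <= minn M t by move/leq_trans; apply; apply: geq_minr.
elim: M => [|M IH]; first by rewrite big_geq.
by rewrite big_nat_recr //=; case: (leqP M.+1 t) => _; lia.
Qed.

(* Legendre's formula: each term of the sum for (2n)! exceeds twice the one
   for n! by at most 1, and only the terms with p ^ k <= 2n are nonzero. *)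
Lemma logn_central_bin_le p n : prime p -> 0 < n ->
  logn p 'C(n.*2, n) <= trunc_log p n.*2.
Proof.
move=> p_pr n_gt0; have p_gt1 := prime_gt1 p_pr.
set t := trunc_log p n.*2.
have bin_fact2 : 'C(n.*2, n) * (n`! * n`!) = (n.*2)`!.
  by have := bin_fact (leq_addr n n); rewrite addnK addnn.
have bin_gt0 : 0 < 'C(n.*2, n) by rewrite bin_gt0 -addnn leq_addr.
have logn_fact2 : logn p 'C(n.*2, n) + (logn p n`!).*2 = logn p (n.*2)`!.
  by rewrite -bin_fact2 lognM ?muln_gt0 ?fact_gt0 // lognM ?fact_gt0 // addnn.
have widen : \sum_(1 <= k < n.+1) n %/ p ^ k = \sum_(1 <= k < n.*2.+1) n %/ p ^ k.
  rewrite [RHS](big_cat_nat _ (n := n.+1)) //=; last by rewrite -addnn; lia.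
  rewrite [X in _ = _ + X]big1_seq ?addn0 // => k /andP[_].
  rewrite mem_index_iota => /andP[k_gt _]; apply: divn_small.
  exact: ltn_trans k_gt (ltn_expl k p_gt1).
have termwise : \sum_(1 <= k < n.*2.+1) n.*2 %/ p ^ k <=
    \sum_(1 <= k < n.*2.+1) ((n %/ p ^ k).*2 + (k <= t)).
  apply: leq_sum => k _; case: (leqP k t) => k_t.
    by apply: divn_double_le; rewrite expn_gt0 ltnW.
  by rewrite divn_small //; apply: leq_trans (trunc_log_ltn _ p_gt1) _; rewrite leq_exp2l.
have sum_double : \sum_(1 <= k < n.*2.+1) (n %/ p ^ k).*2 =
    (\sum_(1 <= k < n.*2.+1) n %/ p ^ k).*2.
  by rewrite -[RHS]mul2n big_distrr /=; apply: eq_bigr => k _; rewrite mul2n.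
rewrite big_split /= sum_double -widen -!logn_fact // in termwise.
have := sum_leq_indicator t n.*2; lia.
Qed.

Lemma central_bin_pfactor_le p n : 0 < n -> p \in primes 'C(n.*2, n) ->
  p ^ logn p 'C(n.*2, n) <= n.*2.
Proof.
move=> n_gt0; rewrite mem_primes => /andP[p_pr _].
apply: leq_trans (trunc_logP (prime_gt1 p_pr) _); last by rewrite double_gt0.
by rewrite leq_exp2l ?prime_gt1 // logn_central_bin_le.
Qed.

(* The prime factors of 'C(2n, n) are primes <= 2n,
   each contributing a prime power <= 2n. *)
Lemma pow2_le_pow_prime_pi n : 0 < n -> 2 ^ n <= n.*2 ^ prime_pi n.*2.
Proof.
move=> n_gt0.
have bin_gt0 : 0 < 'C(n.*2, n) by rewrite bin_gt0 -addnn leq_addr.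
apply: leq_trans (central_bin_ge_pow2 n) _.
rewrite {1}(prod_prime_decomp bin_gt0) prime_decompE big_map /= big_seq.
apply: leq_trans (leq_prod (E2 := fun _ => n.*2) _) _.
  by move=> p; apply: central_bin_pfactor_le.
rewrite -big_seq big_const_seq count_predT iter_muln_1 prime_piE.
apply: leq_pexp2l; first by rewrite double_gt0.
rewrite -size_filter; apply: uniq_leq_size; first exact: primes_uniq.
move=> p p_in; rewrite mem_filter mem_iota /=.
have p_pr : prime p by move: p_in; rewrite mem_primes => /andP[].
have : 0 < trunc_log p n.*2.
  by apply: leq_trans (logn_central_bin_le p n p_pr n_gt0); rewrite logn_gt0.
rewrite trunc_log_gt0 => /andP[_ p_le].
by rewrite p_pr /=; lia.
Qed.

Lemma expn_pow m k : expn m k = Nat.pow m k.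
Proof. by elim: k => //= k IH; rewrite expnS IH. Qed.

Lemma pow2_le_pow_prime_pi_nat n :
  (0 < n)%coq_nat -> (Nat.pow 2 n <= Nat.pow (Nat.mul 2 n) (prime_pi (Nat.mul 2 n)))%coq_nat.
Proof.
by move=> /ltP n_gt0; apply/leP; rewrite -!expn_pow -mulnE mul2n; apply: pow2_le_pow_prime_pi.
Qed.

End Chebyshev.

Open Scope R_scope.

(** * Finite sums and moment inequalities *)

Definition sumR {A} (l : list A) (f : A -> R) : R := fold_right Rplus 0 (map f l).

Lemma sumR_cons {A} (a : A) l f : sumR (a :: l) f = f a + sumR l f.
Proof. reflexivity. Qed.

Lemma sumR_ext {A} (l : list A) f g :
  (forall x, In x l -> f x = g x) -> sumR l f = sumR l g.
Proof.
  induction l as [|a l IH]; intros H; [reflexivity|].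
  rewrite !sumR_cons, H, IH; [reflexivity| |left; reflexivity].
  intros x Hx; apply H; right; exact Hx.
Qed.

Lemma sumR_plus {A} (l : list A) f g :
  sumR l (fun x => f x + g x) = sumR l f + sumR l g.
Proof. induction l; [unfold sumR; simpl; lra|]. rewrite !sumR_cons, IHl. lra. Qed.

Lemma sumR_scal {A} (l : list A) c f : sumR l (fun x => c * f x) = c * sumR l f.
Proof. induction l; [unfold sumR; simpl; lra|]. rewrite !sumR_cons, IHl. lra. Qed.

Lemma sumR_le {A} (l : list A) f g :
  (forall x, In x l -> f x <= g x) -> sumR l f <= sumR l g.
Proof.
  induction l as [|a l IH]; intros H; [unfold sumR; simpl; lra|].
  rewrite !sumR_cons. apply Rplus_le_compat; [apply H; left; reflexivity|].
  apply IH; intros x Hx; apply H; right; exact Hx.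
Qed.

Lemma sumR_nonneg {A} (l : list A) f : (forall x, In x l -> 0 <= f x) -> 0 <= sumR l f.
Proof.
  intros H. induction l as [|a l IH]; [unfold sumR; simpl; lra|].
  rewrite sumR_cons. apply Rplus_le_le_0_compat; [apply H; left; reflexivity|].
  apply IH; intros x Hx; apply H; right; exact Hx.
Qed.

Lemma sumR_const {A} (l : list A) c : sumR l (fun _ => c) = INR (length l) * c.
Proof.
  induction l; [unfold sumR; simpl; lra|]. rewrite sumR_cons, IHl, length_cons, S_INR. lra.
Qed.

Lemma sumR_swap {A B} (l1 : list A) (l2 : list B) f :
  sumR l1 (fun x => sumR l2 (fun y => f x y)) = sumR l2 (fun y => sumR l1 (fun x => f x y)).
Proof.
  induction l1 as [|a l1 IH].
  - unfold sumR at 1; simpl. rewrite (sumR_ext _ _ (fun _ => 0)) by reflexivity.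
    rewrite sumR_const. ring.
  - rewrite sumR_cons, IH, <- sumR_plus. reflexivity.
Qed.

Lemma sumR_mul {A B} (l1 : list A) (l2 : list B) f g :
  sumR l1 f * sumR l2 g = sumR l1 (fun x => sumR l2 (fun y => f x * g y)).
Proof. induction l1; [unfold sumR; simpl; lra|]. rewrite !sumR_cons, <- IHl1, sumR_scal. lra. Qed.

Lemma sumR_ge_term {A} (l : list A) f x :
  In x l -> (forall y, In y l -> 0 <= f y) -> f x <= sumR l f.
Proof.
  induction l as [|a l IH]; intros Hx H; [destruct Hx|]. rewrite sumR_cons.
  assert (0 <= f a) by (apply H; left; auto).
  assert (0 <= sumR l f) by (apply sumR_nonneg; intros; apply H; right; auto).
  destruct Hx as [<-|Hx]; [lra|].
  assert (f x <= sumR l f) by (apply IH; auto; intros; apply H; right; auto). lra.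
Qed.

Lemma sumR_telescope (g : nat -> R) a n :
  sumR (seq a n) (fun x => g (S x) - g x) = g (a + n)%nat - g a.
Proof.
  revert a; induction n; intros a; simpl.
  - rewrite Nat.add_0_r. unfold sumR; simpl; lra.
  - rewrite sumR_cons, IHn, Nat.add_succ_r. simpl. lra.
Qed.

Definition b2R (b : bool) : R := if b then 1 else 0.

Lemma b2R_nonneg b : 0 <= b2R b. Proof. destruct b; simpl; lra. Qed.
Lemma b2R_le1 b : b2R b <= 1. Proof. destruct b; simpl; lra. Qed.
Lemma b2R_and a b : b2R (a && b) = b2R a * b2R b. Proof. destruct a, b; simpl; ring. Qed.

Lemma sumR_b2R {A} (l : list A) (P : A -> bool) :
  sumR l (fun x => b2R (P x)) = INR (length (filter P l)).
Proof.
  induction l as [|a l IH]; [reflexivity|]. rewrite sumR_cons, IH. cbn [filter].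
  unfold b2R; destruct (P a); simpl length; rewrite ?S_INR; lra.
Qed.

Lemma sumR_Cauchy_Schwarz {A} (l : list A) u v :
  (sumR l (fun x => u x * v x)) ^ 2 <= sumR l (fun x => u x ^ 2) * sumR l (fun x => v x ^ 2).
Proof.
  induction l as [|a0 l IH]; [unfold sumR; simpl; lra|]. rewrite !sumR_cons.
  set (S := sumR l (fun x => u x * v x)) in *.
  set (U := sumR l (fun x => u x ^ 2)) in *.
  set (V := sumR l (fun x => v x ^ 2)) in *.
  assert (HU : 0 <= U) by (apply sumR_nonneg; intros; nra).
  assert (HV : 0 <= V) by (apply sumR_nonneg; intros; nra).
  set (a := u a0). set (b := v a0).
  (* the cross term is bounded using [S^2 <= U V] *)
  assert (cross : 2 * S * a * b <= U * b ^ 2 + V * a ^ 2).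
  { assert (E : (U * b^2 + V * a^2)^2 - (2 * S * a * b)^2
                = (U * b^2 - V * a^2)^2 + 4 * a^2 * b^2 * (U * V - S^2)) by ring.
    assert (0 <= a^2 * b^2 * (U * V - S^2))
      by (apply Rmult_le_pos; [apply Rmult_le_pos; apply pow2_ge_0 | lra]).
    assert (0 <= (U * b^2 + V * a^2)^2 - (2 * S * a * b)^2)
      by (rewrite E; pose proof (pow2_ge_0 (U * b^2 - V * a^2)); lra).
    assert (0 <= U * b^2 + V * a^2) by nra.
    nra. }
  nra.
Qed.

Lemma sumR_Holder_moments {A} (l : list A) a : (forall x, In x l -> 0 <= a x) ->
  (sumR l (fun x => a x ^ 2)) ^ 3 <= (sumR l a) ^ 2 * sumR l (fun x => a x ^ 4).
Proof.
  intros Ha.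
  set (S1 := sumR l a). set (S2 := sumR l (fun x => a x ^ 2)).
  set (S3 := sumR l (fun x => a x ^ 3)). set (S4 := sumR l (fun x => a x ^ 4)).
  assert (H13 : S2 ^ 2 <= S1 * S3).
  { pose proof (sumR_Cauchy_Schwarz l (fun x => sqrt (a x)) (fun x => a x * sqrt (a x))) as C.
    cbv beta in C.
    assert (sq : forall x, In x l -> sqrt (a x) * sqrt (a x) = a x)
      by (intros; apply sqrt_sqrt, Ha; auto).
    rewrite (sumR_ext l (fun x => sqrt (a x) * (a x * sqrt (a x))) (fun x => a x ^ 2)),
      (sumR_ext l (fun x => sqrt (a x) ^ 2) a),
      (sumR_ext l (fun x => (a x * sqrt (a x)) ^ 2) (fun x => a x ^ 3)) in C
      by (intros x Hx; pose proof (sq x Hx) as E; set (s := sqrt (a x)) in *; rewrite <- E; ring).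
    exact C. }
  assert (H24 : S3 ^ 2 <= S2 * S4).
  { pose proof (sumR_Cauchy_Schwarz l a (fun x => a x ^ 2)) as C.
    cbv beta in C.
    rewrite (sumR_ext l _ (fun x => a x ^ 3)),
      (sumR_ext l (fun x => (a x ^ 2) ^ 2) (fun x => a x ^ 4))
      in C by (intros; ring).
    exact C. }
  assert (P1 : 0 <= S1) by (apply sumR_nonneg; auto).
  assert (P2 : 0 <= S2) by (apply sumR_nonneg; intros x Hx; pose proof (Ha x Hx); nra).
  assert (P3 : 0 <= S3) by (apply sumR_nonneg; intros x Hx; pose proof (Ha x Hx); nra).
  assert (P4 : 0 <= S4) by (apply sumR_nonneg; intros x Hx; pose proof (Ha x Hx); nra).
  destruct (Req_dec S2 0) as [Z|Z]; [rewrite Z; nra|].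
  assert (S2 ^ 4 <= S1 ^ 2 * S2 * S4).
  { assert ((S2 ^ 2) ^ 2 <= (S1 * S3) ^ 2) by (apply pow_incr; nra). nra. }
  apply Rmult_le_reg_r with S2; nra.
Qed.

Lemma sumR_mean_sq_le {A} (l : list A) a : 0 < INR (length l) ->
  (sumR l a / INR (length l)) ^ 2 <= sumR l (fun x => a x ^ 2) / INR (length l).
Proof.
  intros Hn. pose proof (sumR_Cauchy_Schwarz l (fun _ => 1) a) as CS. cbv beta in CS.
  rewrite (sumR_ext _ (fun x => 1 * a x) a), (sumR_ext _ (fun _ => 1 ^ 2) (fun _ => 1)),
    sumR_const in CS by (intros; ring).
  apply Rmult_le_reg_r with (INR (length l) ^ 2); [nra|].
  replace ((sumR l a / INR (length l)) ^ 2 * INR (length l) ^ 2) with (sumR l a ^ 2)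
    by (field; lra).
  replace (sumR l (fun x => a x ^ 2) / INR (length l) * INR (length l) ^ 2)
    with (INR (length l) * 1 * sumR l (fun x => a x ^ 2)) by (field; lra).
  exact CS.
Qed.

Lemma sumR_mean_Holder_moments {A} (l : list A) a :
  0 < INR (length l) -> (forall x, In x l -> 0 <= a x) ->
  (sumR l (fun x => a x ^ 2) / INR (length l)) ^ 3 <=
  (sumR l a / INR (length l)) ^ 2 * (sumR l (fun x => a x ^ 4) / INR (length l)).
Proof.
  intros Hn Ha. pose proof (sumR_Holder_moments l a Ha) as H.
  replace ((sumR l (fun x => a x ^ 2) / INR (length l)) ^ 3)
    with ((sumR l (fun x => a x ^ 2)) ^ 3 / INR (length l) ^ 3) by (field; lra).
  replace ((sumR l a / INR (length l)) ^ 2 * (sumR l (fun x => a x ^ 4) / INR (length l)))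
    with ((sumR l a) ^ 2 * sumR l (fun x => a x ^ 4) / INR (length l) ^ 3) by (field; lra).
  apply Rmult_le_compat_r; [apply Rlt_le, Rinv_0_lt_compat, pow_lt|]; assumption.
Qed.

(** * Moments of exponential sums *)

Lemma cos_sin_2PI_IZR z : cos (2 * PI * IZR z) = 1 /\ sin (2 * PI * IZR z) = 0.
Proof.
  assert (H : forall n, cos (2 * PI * INR n) = 1 /\ sin (2 * PI * INR n) = 0).
  { intros n. pose proof (cos_period 0 n). pose proof (sin_period 0 n).
    rewrite cos_0, sin_0 in *. replace (0 + 2 * INR n * PI) with (2 * PI * INR n) in * by ring.
    auto. }
  destruct (Z_le_gt_dec 0 z).
  - replace z with (Z.of_nat (Z.to_nat z)) by lia. rewrite <- INR_IZR_INZ. apply H.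
  - replace z with (- Z.of_nat (Z.to_nat (- z)))%Z by lia. rewrite opp_IZR, <- INR_IZR_INZ.
    replace (2 * PI * - INR (Z.to_nat (- z))) with (- (2 * PI * INR (Z.to_nat (- z)))) by ring.
    rewrite cos_neg, sin_neg. destruct (H (Z.to_nat (- z))) as [-> ->]. split; lra.
Qed.

Definition dvd_ind (p : nat) (M : Z) : R := b2R (Z.eqb (M mod Z.of_nat p) 0).

Definition ang (p x : nat) (t : R) : R := 2 * PI * (INR x * t / INR p).

(* For p not dividing M the sum telescopes after multiplication by 2 sin (pi M / p). *)
Lemma sumR_cos_ang (p : nat) (M : Z) : (0 < p)%nat ->
  sumR (seq 0 p) (fun x => cos (ang p x (IZR M))) = INR p * dvd_ind p M.
Proof.
  intros Hp. assert (HpR : 0 < INR p) by (apply lt_0_INR; lia).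
  unfold dvd_ind, ang, b2R.
  destruct (Z.eqb_spec (M mod Z.of_nat p) 0) as [E|E].
  - apply Z.mod_divide in E; [|lia]. destruct E as [k Hk].
    rewrite (sumR_ext _ _ (fun _ => 1)), sumR_const, length_seq; [ring|].
    intros x _.
    replace (2 * PI * (INR x * IZR M / INR p)) with (2 * PI * IZR (Z.of_nat x * k))
      by (rewrite Hk, !mult_IZR, <- !INR_IZR_INZ; field; lra).
    apply cos_sin_2PI_IZR.
  - set (al := 2 * PI * IZR M / INR p).
    assert (Hs : sin (al / 2) <> 0).
    { intros Hs. apply sin_eq_0_0 in Hs. destruct Hs as [k Hk]. apply E.
      apply Z.mod_divide; [lia|]. exists k. apply eq_IZR. rewrite mult_IZR, <- INR_IZR_INZ.
      assert (PI > 0) by apply PI_RGT_0.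
      apply Rmult_eq_reg_r with (PI / INR p); [|apply Rgt_not_eq, Rdiv_lt_0_compat; lra].
      replace (IZR M * (PI / INR p)) with (al / 2) by (unfold al; field; lra).
      rewrite Hk. field. lra. }
    set (g := fun x : nat => sin (INR x * al - al / 2)).
    assert (T : sumR (seq 0 p) (fun x => 2 * sin (al / 2) * cos (2 * PI * (INR x * IZR M / INR p)))
                = sumR (seq 0 p) (fun x => g (S x) - g x)).
    { apply sumR_ext. intros x _. unfold g. rewrite S_INR.
      replace ((INR x + 1) * al - al / 2) with (INR x * al + al / 2) by field.
      replace (2 * PI * (INR x * IZR M / INR p)) with (INR x * al) by (unfold al; field; lra).
      rewrite sin_plus, sin_minus. ring. }
    rewrite sumR_scal, sumR_telescope in T. unfold g in T.
    replace (INR (0 + p) * al - al / 2) with (2 * PI * IZR M - al / 2) in T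
      by (rewrite Nat.add_0_l; unfold al; field; lra).
    rewrite sin_minus in T. destruct (cos_sin_2PI_IZR M) as [-> ->] in T.
    replace (INR 0 * al - al / 2) with (- (al / 2)) in T by (rewrite INR_0; ring).
    rewrite sin_neg in T.
    apply (Rmult_eq_reg_l (2 * sin (al / 2))); [lra|]. lra.
Qed.

Lemma sumR_cos_sin_sq {A} (l : list A) (th : A -> R) :
  (sumR l (fun n => cos (th n))) ^ 2 + (sumR l (fun n => sin (th n))) ^ 2 =
  sumR l (fun n => sumR l (fun m => cos (th n - th m))).
Proof.
  rewrite <- !Rsqr_pow2; unfold Rsqr; rewrite !sumR_mul, <- sumR_plus.
  apply sumR_ext; intros n _. rewrite <- sumR_plus.
  apply sumR_ext; intros m _. rewrite cos_minus. ring.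
Qed.

Lemma sumR_cos_mul_cos_pairs {A} (l : list A) (th : A -> R) a :
  sumR l (fun k => sumR l (fun m => cos a * cos (th k - th m))) =
  sumR l (fun k => sumR l (fun m => cos (a + th k - th m))).
Proof.
  (* cos a cos b is the mean of cos (a + b) and cos (a - b); exchanging k and m
     turns the second into the first *)
  transitivity (sumR l (fun k => sumR l (fun m =>
    / 2 * (cos (a + th k - th m) + cos (a + th m - th k))))).
  { apply sumR_ext; intros k _; apply sumR_ext; intros m _.
    replace (a + th k - th m) with (a + (th k - th m)) by ring.
    replace (a + th m - th k) with (a - (th k - th m)) by ring.
    set (b := th k - th m). rewrite cos_plus, cos_minus. field. }
  rewrite (sumR_ext _ _ (fun k => / 2 * sumR l (fun m => cos (a + th k - th m))
                                 + / 2 * sumR l (fun m => cos (a + th m - th k))))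
    by (intros k _; rewrite <- !sumR_scal, <- sumR_plus; apply sumR_ext; intros; ring).
  rewrite sumR_plus, !sumR_scal, (sumR_swap l l (fun k m => cos (a + th m - th k))).
  field.
Qed.

Lemma sumR_cos_pairs_sq {A} (l : list A) (th : A -> R) :
  (sumR l (fun n => sumR l (fun m => cos (th n - th m)))) ^ 2 =
  sumR l (fun n => sumR l (fun k => sumR l (fun m => sumR l (fun j =>
    cos (th n + th k - th m - th j))))).
Proof.
  rewrite <- Rsqr_pow2; unfold Rsqr.
  set (X := sumR l (fun n => sumR l (fun m => cos (th n - th m)))) at 2.
  rewrite <- (Rmult_comm X), <- sumR_scal.
  transitivity (sumR l (fun n => sumR l (fun m => sumR l (fun k => sumR l (fun j =>
    cos (th n - th m + th k - th j)))))).
  { apply sumR_ext; intros n _. rewrite <- sumR_scal.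
    apply sumR_ext; intros m _. rewrite Rmult_comm. unfold X. rewrite <- sumR_scal.
    rewrite <- sumR_cos_mul_cos_pairs.
    apply sumR_ext; intros k _. symmetry; apply sumR_scal. }
  apply sumR_ext; intros n _. rewrite sumR_swap.
  apply sumR_ext; intros k _. apply sumR_ext; intros m _. apply sumR_ext; intros j _.
  f_equal; ring.
Qed.

Definition expsum (u : nat -> nat) (I : list nat) (p x : nat) : C :=
  fold_right Cplus 0%C (map (fun n => e2pi (INR x * INR (u n) / INR p)) I).

Definition collisions2 (u : nat -> nat) (I : list nat) (p : nat) : R :=
  sumR I (fun n => sumR I (fun m => dvd_ind p (Z.of_nat (u n) - Z.of_nat (u m)))).

Definition collisions4 (u : nat -> nat) (I : list nat) (p : nat) : R :=
  sumR I (fun a => sumR I (fun b => sumR I (fun c => sumR I (fun d =>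
    dvd_ind p (Z.of_nat (u a) + Z.of_nat (u b) - Z.of_nat (u c) - Z.of_nat (u d)))))).

Section Moments.

Variables (u : nat -> nat) (I : list nat) (p : nat).
Hypothesis p_pos : (0 < p)%nat.

Let th (x n : nat) : R := ang p x (INR (u n)).

Lemma Cmod_expsum_sq x :
  Cmod (expsum u I p x) ^ 2 = sumR I (fun n => sumR I (fun m => cos (th x n - th x m))).
Proof.
  rewrite Cmod2_alt, <- sumR_cos_sin_sq. unfold Re, Im.
  assert (parts : forall J, expsum u J p x =
    (sumR J (fun n => cos (th x n)), sumR J (fun n => sin (th x n)))).
  { induction J as [|n J IH]; [reflexivity|].
    unfold expsum in *; simpl fold_right; rewrite IH. reflexivity. }
  rewrite parts. reflexivity.
Qed.

Lemma sumR_Cmod_expsum_pow2 :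
  sumR (seq 0 p) (fun x => Cmod (expsum u I p x) ^ 2) = INR p * collisions2 u I p.
Proof.
  rewrite (sumR_ext _ _ _ (fun x _ => Cmod_expsum_sq x)), sumR_swap.
  unfold collisions2. rewrite <- sumR_scal. apply sumR_ext; intros n _.
  rewrite sumR_swap, <- sumR_scal. apply sumR_ext; intros m _.
  rewrite <- sumR_cos_ang by exact p_pos. apply sumR_ext; intros x _.
  unfold th, ang. rewrite minus_IZR, <- !INR_IZR_INZ. f_equal. unfold Rdiv. ring.
Qed.

Lemma sumR_Cmod_expsum_pow4 :
  sumR (seq 0 p) (fun x => Cmod (expsum u I p x) ^ 4) = INR p * collisions4 u I p.
Proof.
  rewrite (sumR_ext _ _ (fun x => (Cmod (expsum u I p x) ^ 2) ^ 2)) by (intros; ring).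
  rewrite (sumR_ext _ _ _ (fun x _ => f_equal (fun y => y ^ 2) (Cmod_expsum_sq x))).
  rewrite (sumR_ext _ _ _ (fun x _ => sumR_cos_pairs_sq I (th x))).
  unfold collisions4. rewrite <- sumR_scal. rewrite sumR_swap. apply sumR_ext; intros a _.
  rewrite <- sumR_scal, sumR_swap. apply sumR_ext; intros b _.
  rewrite <- sumR_scal, sumR_swap. apply sumR_ext; intros c _.
  rewrite <- sumR_scal, sumR_swap. apply sumR_ext; intros d _.
  rewrite <- sumR_cos_ang by exact p_pos. apply sumR_ext; intros x _.
  unfold th, ang. rewrite !minus_IZR, plus_IZR, <- !INR_IZR_INZ. f_equal. unfold Rdiv. ring.
Qed.

End Moments.

(** * Additive structure of Fibonacci numbers *)

Lemma fib_SS n : fib (S (S n)) = (fib (S n) + fib n)%nat.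
Proof. reflexivity. Qed.

Lemma fib_le_S n : (fib n <= fib (S n))%nat.
Proof. destruct n as [|[|n]]; [simpl; lia | simpl; lia | rewrite (fib_SS (S n)); lia]. Qed.

Lemma fib_le_mono n m : (n <= m)%nat -> (fib n <= fib m)%nat.
Proof. induction 1; [lia|]. pose proof (fib_le_S m). lia. Qed.

Lemma fib_pos n : (1 <= n)%nat -> (1 <= fib n)%nat.
Proof. intros H. pose proof (fib_le_mono 1 n H). simpl in *. lia. Qed.

Lemma fib_lt_S n : (2 <= n)%nat -> (fib n < fib (S n))%nat.
Proof.
  intros H. destruct n as [|[|n]]; try lia.
  rewrite (fib_SS (S n)). pose proof (fib_pos (S n)). lia.
Qed.

Lemma fib_le_pow2 n : (fib n <= 2 ^ n)%nat.
Proof.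
  induction n as [n IH] using (well_founded_induction lt_wf).
  destruct n as [|[|n]]; [simpl; lia | simpl; lia |].
  rewrite fib_SS. pose proof (IH (S n) ltac:(lia)). pose proof (IH n ltac:(lia)).
  rewrite !Nat.pow_succ_r' in *. lia.
Qed.

Lemma fib_eq_lt_add2 x y : (1 <= x <= y)%nat -> fib x = fib y -> (y < x + 2)%nat.
Proof.
  intros Hxy E. destruct (Nat.lt_ge_cases y (x + 2)) as [|Hy]; [assumption|].
  pose proof (fib_le_mono x (y - 1) ltac:(lia)).
  pose proof (fib_lt_S (y - 1) ltac:(lia)). replace (S (y - 1)) with y in * by lia. lia.
Qed.

Lemma fib_double_lt x : (1 <= x)%nat -> (2 * fib x < fib (x + 3))%nat.
Proof.
  intros H. replace (x + 3)%nat with (S (S (S x))) by lia. rewrite !fib_SS.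
  pose proof (fib_le_S x). pose proof (fib_pos x H). lia.
Qed.

Lemma length_filter_bounded (P : nat -> bool) b a n :
  (forall y, P y = true -> (y < b)%nat) -> (length (filter P (seq a n)) <= b - a)%nat.
Proof.
  revert a; induction n; intros a H; simpl; [lia|].
  specialize (IHn (S a) H). destruct (P a) eqn:E; simpl; [pose proof (H a E)|]; lia.
Qed.

Lemma length_filter_window (P : nat -> bool) w a n :
  (forall x y, (a <= x <= y)%nat -> P x = true -> P y = true -> (y < x + w)%nat) ->
  (length (filter P (seq a n)) <= w)%nat.
Proof.
  revert a; induction n; intros a H; simpl; [lia|].
  destruct (P a) eqn:E; simpl.
  - pose proof (H a a ltac:(lia) E E).
    rewrite (filter_ext_in _ (fun y => P y && Nat.ltb a y)).
    + pose proof (length_filter_bounded (fun y => P y && Nat.ltb a y) (a + w) (S a) n) as L.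
      enough ((length (filter (fun y => P y && Nat.ltb a y) (seq (S a) n)) <= a + w - S a)%nat)
        by lia.
      apply L. intros y [Py Hy]%andb_true_iff. apply Nat.ltb_lt in Hy. apply (H a y); auto; lia.
    + intros y Hy. apply in_seq in Hy. replace (Nat.ltb a y) with true
        by (symmetry; apply Nat.ltb_lt; lia). now rewrite andb_true_r.
  - apply IHn. intros x y Hx. apply H. lia.
Qed.

Lemma fib_fiber_size t K : (length (filter (fun d => Nat.eqb (fib d) t) (seq 1 K)) <= 2)%nat.
Proof.
  apply length_filter_window. intros x y Hxy Px Py.
  apply Nat.eqb_eq in Px, Py. apply fib_eq_lt_add2; lia.
Qed.

Lemma fib_dyadic_window_size v K :
  (length (filter (fun c => Nat.leb (fib c) v && Nat.leb v (2 * fib c)) (seq 1 K)) <= 3)%nat.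
Proof.
  apply length_filter_window. intros x y Hxy [P1 P2]%andb_true_iff [P3 P4]%andb_true_iff.
  apply Nat.leb_le in P1, P2, P3, P4.
  destruct (Nat.lt_ge_cases y (x + 3)) as [|Hy]; [assumption|].
  pose proof (fib_double_lt x ltac:(lia)). pose proof (fib_le_mono (x + 3) y Hy). lia.
Qed.

Lemma fib_ordered_reps_le v K :
  sumR (seq 1 K) (fun c => sumR (seq 1 K) (fun d =>
    b2R (Nat.eqb v (fib c + fib d) && Nat.leb (fib d) (fib c)))) <= 6.
Proof.
  (* F_d <= F_c forces F_c <= v <= 2 F_c, which leaves three values of c and
     for each of them two values of d *)
  apply Rle_trans with
    (sumR (seq 1 K) (fun c => 2 * b2R (Nat.leb (fib c) v && Nat.leb v (2 * fib c)))).
  - apply sumR_le. intros c _.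
    destruct (Nat.leb (fib c) v && Nat.leb v (2 * fib c)) eqn:W; simpl b2R.
    + apply Rle_trans with (sumR (seq 1 K) (fun d => b2R (Nat.eqb (fib d) (v - fib c)))).
      * apply sumR_le. intros d _.
        destruct (Nat.eqb v (fib c + fib d)) eqn:E; simpl; [|apply b2R_nonneg].
        apply Nat.eqb_eq in E. replace (Nat.eqb (fib d) (v - fib c)) with true
          by (symmetry; apply Nat.eqb_eq; lia).
        apply b2R_le1.
      * rewrite sumR_b2R. pose proof (le_INR _ _ (fib_fiber_size (v - fib c) K)). simpl in *. lra.
    + rewrite (sumR_ext _ _ (fun _ => 0)), sumR_const; [lra|]. intros d _.
      destruct (Nat.eqb v (fib c + fib d) && Nat.leb (fib d) (fib c)) eqn:E; [|reflexivity].
      apply andb_true_iff in E as [E1 E2]. apply Nat.eqb_eq in E1. apply Nat.leb_le in E2.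
      apply andb_false_iff in W as [W|W]; apply Nat.leb_gt in W; lia.
  - rewrite sumR_scal, sumR_b2R. pose proof (le_INR _ _ (fib_dyadic_window_size v K)).
    simpl INR in *. lra.
Qed.

Lemma fib_sum_reps_le v K :
  sumR (seq 1 K) (fun c => sumR (seq 1 K) (fun d => b2R (Nat.eqb v (fib c + fib d)))) <= 12.
Proof.
  set (ord c d := b2R (Nat.eqb v (fib c + fib d) && Nat.leb (fib d) (fib c))).
  apply Rle_trans with (sumR (seq 1 K) (fun c => sumR (seq 1 K) (fun d => ord c d + ord d c))).
  - apply sumR_le; intros c _; apply sumR_le; intros d _. unfold ord.
    pose proof (b2R_nonneg (Nat.eqb v (fib c + fib d) && Nat.leb (fib d) (fib c))).
    pose proof (b2R_nonneg (Nat.eqb v (fib d + fib c) && Nat.leb (fib c) (fib d))).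
    destruct (Nat.eqb v (fib c + fib d)) eqn:E; cbn [andb].
    2: change (b2R false) with 0; lra.
    apply Nat.eqb_eq in E. rewrite (proj2 (Nat.eqb_eq v (fib d + fib c))) by lia.
    destruct (Nat.leb_spec (fib d) (fib c)); cbn [andb].
    { pose proof (b2R_nonneg (Nat.leb (fib c) (fib d))). simpl; lra. }
    rewrite (proj2 (Nat.leb_le (fib c) (fib d))) by lia. simpl; lra.
  - rewrite (sumR_ext _ _ (fun c => sumR (seq 1 K) (fun d => ord c d)
                                  + sumR (seq 1 K) (fun d => ord d c)))
      by (intros; apply sumR_plus).
    rewrite sumR_plus, (sumR_swap _ _ (fun c d => ord d c)).
    assert (sumR (seq 1 K) (fun c => sumR (seq 1 K) (fun d => ord c d)) <= 6)
      by exact (fib_ordered_reps_le v K).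
    lra.
Qed.

Lemma fib_eq_pairs_le K :
  sumR (seq 1 K) (fun n => sumR (seq 1 K) (fun m => b2R (Nat.eqb (fib n) (fib m)))) <= 2 * INR K.
Proof.
  replace (2 * INR K) with (sumR (seq 1 K) (fun _ => 2))
    by (rewrite sumR_const, length_seq; ring).
  apply sumR_le. intros n _.
  rewrite (sumR_ext _ _ (fun m => b2R (Nat.eqb (fib m) (fib n))))
    by (intros; rewrite Nat.eqb_sym; reflexivity).
  rewrite sumR_b2R. pose proof (le_INR _ _ (fib_fiber_size (fib n) K)). simpl INR in *. lra.
Qed.

Lemma fib_additive_energy_le K :
  sumR (seq 1 K) (fun a => sumR (seq 1 K) (fun b => sumR (seq 1 K) (fun c => sumR (seq 1 K)
    (fun d => b2R (Nat.eqb (fib a + fib b) (fib c + fib d)))))) <= 12 * INR K ^ 2.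
Proof.
  replace (12 * INR K ^ 2) with (sumR (seq 1 K) (fun _ => sumR (seq 1 K) (fun _ => 12)))
    by (rewrite !sumR_const, length_seq; ring).
  apply sumR_le; intros a _; apply sumR_le; intros b _. apply fib_sum_reps_le.
Qed.

(** * Primes with few extra collisions *)

Definition dvd_nonzero (p : nat) (M : Z) : bool :=
  negb (Z.eqb M 0) && Z.eqb (M mod Z.of_nat p) 0.

Lemma dvd_ind_le (p : nat) (M : Z) : dvd_ind p M <= b2R (Z.eqb M 0) + b2R (dvd_nonzero p M).
Proof.
  unfold dvd_ind, dvd_nonzero. pose proof (b2R_le1 (Z.eqb (M mod Z.of_nat p) 0)).
  pose proof (b2R_nonneg (Z.eqb (M mod Z.of_nat p) 0)).
  destruct (Z.eqb M 0); simpl; lra.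
Qed.

Definition bad_pairs (u : nat -> nat) (I : list nat) (p : nat) : R :=
  sumR I (fun n => sumR I (fun m => b2R (dvd_nonzero p (Z.of_nat (u n) - Z.of_nat (u m))))).

Definition bad_quads (u : nat -> nat) (I : list nat) (p : nat) : R :=
  sumR I (fun a => sumR I (fun b => sumR I (fun c => sumR I (fun d =>
    b2R (dvd_nonzero p (Z.of_nat (u a) + Z.of_nat (u b) - Z.of_nat (u c) - Z.of_nat (u d))))))).

Lemma b2R_Zeqb_of_nat (M : Z) (a b : nat) :
  M = (Z.of_nat a - Z.of_nat b)%Z -> b2R (Z.eqb M 0) = b2R (Nat.eqb a b).
Proof.
  intros ->. destruct (Nat.eqb_spec a b), (Z.eqb_spec (Z.of_nat a - Z.of_nat b) 0);
    reflexivity || lia.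
Qed.

Lemma collisions2_le u I p :
  collisions2 u I p <=
  sumR I (fun n => sumR I (fun m => b2R (Nat.eqb (u n) (u m)))) + bad_pairs u I p.
Proof.
  unfold collisions2, bad_pairs. rewrite <- sumR_plus. apply sumR_le; intros n _.
  rewrite <- sumR_plus. apply sumR_le; intros m _.
  rewrite <- (b2R_Zeqb_of_nat (Z.of_nat (u n) - Z.of_nat (u m))) by reflexivity.
  apply dvd_ind_le.
Qed.

Lemma collisions4_le u I p :
  collisions4 u I p <=
  sumR I (fun a => sumR I (fun b => sumR I (fun c => sumR I (fun d =>
    b2R (Nat.eqb (u a + u b) (u c + u d)))))) + bad_quads u I p.
Proof.
  unfold collisions4, bad_quads. rewrite <- sumR_plus. apply sumR_le; intros a _.
  rewrite <- sumR_plus. apply sumR_le; intros b _.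
  rewrite <- sumR_plus. apply sumR_le; intros c _.
  rewrite <- sumR_plus. apply sumR_le; intros d _.
  rewrite <- (b2R_Zeqb_of_nat
    (Z.of_nat (u a) + Z.of_nat (u b) - Z.of_nat (u c) - Z.of_nat (u d))) by lia.
  apply dvd_ind_le.
Qed.

Lemma collisions2_ge_length u I p : (0 < p)%nat -> INR (length I) <= collisions2 u I p.
Proof.
  intros Hp. unfold collisions2. rewrite <- (Rmult_1_r (INR (length I))), <- sumR_const.
  apply sumR_le. intros n Hn.
  replace 1 with (dvd_ind p (Z.of_nat (u n) - Z.of_nat (u n)))
    by (unfold dvd_ind; rewrite Z.sub_diag, Zmod_0_l; reflexivity).
  apply (sumR_ge_term _ (fun m => dvd_ind p (Z.of_nat (u n) - Z.of_nat (u m)))); auto.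
  intros; apply b2R_nonneg.
Qed.

Lemma fib_expsum_mean_bounds p K : (0 < p)%nat -> (1 <= K)%nat ->
  bad_pairs fib (seq 1 K) p <= INR K -> bad_quads fib (seq 1 K) p <= INR K ^ 2 ->
  let m := sumR (seq 0 p) (fun x => Cmod (expsum fib (seq 1 K) p x)) / INR p in
  INR K / 13 <= m ^ 2 <= 3 * INR K.
Proof.
  intros Hp HK bad2 bad4 m.
  set (a x := Cmod (expsum fib (seq 1 K) p x)).
  assert (len : INR (length (seq 0 p)) = INR p) by (rewrite length_seq; reflexivity).
  assert (PR : 0 < INR p) by (apply lt_0_INR; lia).
  assert (KR : 1 <= INR K) by (apply (le_INR 1); lia).
  assert (M2 : sumR (seq 0 p) (fun x => a x ^ 2) / INR p = collisions2 fib (seq 1 K) p)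
    by (unfold a; rewrite sumR_Cmod_expsum_pow2 by exact Hp; field; lra).
  assert (M4 : sumR (seq 0 p) (fun x => a x ^ 4) / INR p = collisions4 fib (seq 1 K) p)
    by (unfold a; rewrite sumR_Cmod_expsum_pow4 by exact Hp; field; lra).
  assert (C2_lo : INR K <= collisions2 fib (seq 1 K) p).
  { pose proof (collisions2_ge_length fib (seq 1 K) p Hp) as H.
    rewrite length_seq in H. exact H. }
  assert (C2_hi : collisions2 fib (seq 1 K) p <= 3 * INR K)
    by (pose proof (collisions2_le fib (seq 1 K) p); pose proof (fib_eq_pairs_le K); lra).
  assert (C4_hi : collisions4 fib (seq 1 K) p <= 13 * INR K ^ 2)
    by (pose proof (collisions4_le fib (seq 1 K) p); pose proof (fib_additive_energy_le K); lra).
  pose proof (sumR_mean_sq_le (seq 0 p) a) as CS.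
  pose proof (sumR_mean_Holder_moments (seq 0 p) a) as Ho.
  rewrite len, M2 in CS. rewrite len, M2, M4 in Ho. fold a in m.
  specialize (CS PR). specialize (Ho PR (fun x _ => Cmod_ge_0 _)). fold m in CS, Ho.
  split; [|lra].
  assert (INR K ^ 3 <= m ^ 2 * (13 * INR K ^ 2)).
  { apply Rle_trans with (collisions2 fib (seq 1 K) p ^ 3); [apply pow_incr; lra|].
    apply Rle_trans with (1 := Ho). apply Rmult_le_compat_l; [nra|lra]. }
  apply Rmult_le_reg_r with (13 * INR K ^ 2); [nra|].
  replace (INR K / 13 * (13 * INR K ^ 2)) with (INR K ^ 3) by field. lra.
Qed.

Lemma isprime_spec p : isprime p = true <-> prime (Z.of_nat p).
Proof. unfold isprime. destruct (prime_dec (Z.of_nat p)); split; intros; auto; discriminate. Qed.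

Lemma pow2_length_le_of_prime_divisors (l : list nat) (M : Z) : NoDup l ->
  (forall p, In p l -> prime (Z.of_nat p) /\ (Z.of_nat p | M)) -> M <> 0%Z ->
  (2 ^ Z.of_nat (length l) <= Z.abs M)%Z.
Proof.
  revert M. induction l as [|p l IH]; intros M ND H M0; [simpl; lia|].
  destruct (H p (or_introl eq_refl)) as [Pp [M' ->]].
  inversion ND as [|? ? p_notin ND']; subst.
  assert (IH' : (2 ^ Z.of_nat (length l) <= Z.abs M')%Z).
  { apply IH; [exact ND' | | intros ->; lia].
    intros q Hq. destruct (H q (or_intror Hq)) as [Pq Dq]. split; [exact Pq|].
    destruct (prime_mult _ Pq _ _ Dq) as [D|D]; [exact D|].
    assert (Z.of_nat q = Z.of_nat p) by (apply prime_div_prime; auto).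
    exfalso. apply p_notin. replace p with q by lia. exact Hq. }
  assert (2 <= Z.of_nat p)%Z by (destruct Pp; lia).
  rewrite length_cons, Nat2Z.inj_succ, Z.pow_succ_r, Z.abs_mul by lia. nia.
Qed.

Lemma count_prime_divisors_le (N : nat) (M : Z) (B : nat) : (Z.abs M <= 2 ^ Z.of_nat B)%Z ->
  sumR (seq 0 (S N)) (fun p => b2R (isprime p && dvd_nonzero p M)) <= INR B.
Proof.
  intros MB. rewrite sumR_b2R. apply le_INR.
  destruct (Z.eq_dec M 0) as [->|M0].
  { rewrite (filter_ext _ (fun _ => false)), filter_false; [simpl; lia|].
    intros; unfold dvd_nonzero; simpl; apply andb_false_r. }
  set (l := filter _ _).
  assert (H : (2 ^ Z.of_nat (length l) <= Z.abs M)%Z).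
  { apply pow2_length_le_of_prime_divisors; auto; [apply NoDup_filter, seq_NoDup|].
    intros p Hp. apply filter_In in Hp as [_ [P1 [_ P2]%andb_true_iff]%andb_true_iff].
    apply isprime_spec in P1. split; [exact P1|].
    apply Z.eqb_eq in P2. apply Z.mod_divide; [destruct P1; lia | exact P2]. }
  destruct (Nat.le_gt_cases (length l) B) as [|LB]; [assumption|].
  assert (2 ^ Z.of_nat B < 2 ^ Z.of_nat (length l))%Z by (apply Z.pow_lt_mono_r; lia). lia.
Qed.

Definition exceeds (t y : R) : bool := if Rle_dec y t then false else true.

Lemma sumR_b2R_exceeds_le {A} (l : list A) (P : A -> bool) (f : A -> R) (t : R) :
  0 < t -> (forall x, In x l -> 0 <= f x) ->
  t * sumR l (fun x => b2R (P x && exceeds t (f x))) <= sumR l (fun x => b2R (P x) * f x).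
Proof.
  intros Ht Hf. rewrite <- sumR_scal. apply sumR_le. intros x Hx.
  pose proof (Hf x Hx). unfold exceeds.
  destruct (P x), (Rle_dec (f x) t); simpl; lra.
Qed.

Section BadPrimes.

Variables (u : nat -> nat) (I : list nat) (B : nat).
Hypothesis u_le_pow2 : forall n, In n I -> (u n <= 2 ^ B)%nat.

Let u_le_pow2_Z n : In n I -> (0 <= Z.of_nat (u n) <= 2 ^ Z.of_nat B)%Z.
Proof.
  intros Hn. pose proof (u_le_pow2 n Hn). pose proof (Nat2Z.inj_pow 2 B).
  change (Z.of_nat 2) with 2%Z in *. lia.
Qed.

Lemma sumR_primes_bad_pairs_le N :
  sumR (seq 0 (S N)) (fun p => b2R (isprime p) * bad_pairs u I p) <= INR (length I) ^ 2 * INR B.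
Proof.
  unfold bad_pairs.
  rewrite (sumR_ext _ _ (fun p => sumR I (fun n => sumR I (fun m =>
    b2R (isprime p && dvd_nonzero p (Z.of_nat (u n) - Z.of_nat (u m)))))))
    by (intros; rewrite <- sumR_scal; apply sumR_ext; intros;
        rewrite <- sumR_scal; apply sumR_ext; intros; symmetry; apply b2R_and).
  replace (INR (length I) ^ 2 * INR B) with (sumR I (fun _ => sumR I (fun _ => INR B)))
    by (rewrite !sumR_const; ring).
  rewrite sumR_swap. apply sumR_le; intros n Hn.
  rewrite sumR_swap. apply sumR_le; intros m Hm.
  apply count_prime_divisors_le.
  pose proof (u_le_pow2_Z n Hn). pose proof (u_le_pow2_Z m Hm). lia.
Qed.

Lemma sumR_primes_bad_quads_le N :
  sumR (seq 0 (S N)) (fun p => b2R (isprime p) * bad_quads u I p)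
  <= INR (length I) ^ 4 * INR (S B).
Proof.
  unfold bad_quads.
  rewrite (sumR_ext _ _ (fun p => sumR I (fun a => sumR I (fun b => sumR I (fun c => sumR I
    (fun d => b2R (isprime p && dvd_nonzero p
      (Z.of_nat (u a) + Z.of_nat (u b) - Z.of_nat (u c) - Z.of_nat (u d))))))))).
  2: { intros p _. rewrite <- sumR_scal. apply sumR_ext; intros a _.
       rewrite <- sumR_scal. apply sumR_ext; intros b _.
       rewrite <- sumR_scal. apply sumR_ext; intros c _.
       rewrite <- sumR_scal. apply sumR_ext; intros d _. symmetry; apply b2R_and. }
  replace (INR (length I) ^ 4 * INR (S B))
    with (sumR I (fun _ => sumR I (fun _ => sumR I (fun _ => sumR I (fun _ => INR (S B))))))
    by (rewrite !sumR_const; ring).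
  rewrite sumR_swap. apply sumR_le; intros a Ha.
  rewrite sumR_swap. apply sumR_le; intros b Hb.
  rewrite sumR_swap. apply sumR_le; intros c Hc.
  rewrite sumR_swap. apply sumR_le; intros d Hd.
  apply count_prime_divisors_le. rewrite Nat2Z.inj_succ, Z.pow_succ_r by lia.
  pose proof (u_le_pow2_Z a Ha). pose proof (u_le_pow2_Z b Hb).
  pose proof (u_le_pow2_Z c Hc). pose proof (u_le_pow2_Z d Hd). lia.
Qed.

End BadPrimes.

Lemma filter_seq_down_closed (P : nat -> bool) a n :
  (forall x y, (x <= y)%nat -> P y = true -> P x = true) ->
  filter P (seq a n) = seq a (length (filter P (seq a n))).
Proof.
  intros HP. revert a; induction n; intros a; [reflexivity|]. simpl.
  destruct (P a) eqn:E; [simpl; f_equal; apply IHn|].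
  rewrite (filter_ext_in _ (fun _ => false)), filter_false; [reflexivity|].
  intros y Hy. apply in_seq in Hy. destruct (P y) eqn:Ey; [|reflexivity].
  rewrite (HP a y ltac:(lia) Ey) in E. discriminate.
Qed.

Definition leb_R (X : R) (n : nat) : bool := if Rle_dec (INR n) X then true else false.

Lemma filter_leb_R_seq (X : R) (N : nat) : 0 <= X < INR N ->
  exists K, filter (leb_R X) (seq 1 N) = seq 1 K /\ INR K <= X < INR K + 1.
Proof.
  intros HX. set (K := length (filter (leb_R X) (seq 1 N))).
  assert (E : filter (leb_R X) (seq 1 N) = seq 1 K).
  { apply filter_seq_down_closed. intros x y Hxy. unfold leb_R.
    destruct (Rle_dec (INR y) X), (Rle_dec (INR x) X); auto; try discriminate.
    apply le_INR in Hxy. lra. }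
  exists K. split; [exact E|].
  assert (mem : forall n, In n (seq 1 N) -> (In n (seq 1 K) <-> INR n <= X)).
  { intros n Hn. rewrite <- E, filter_In. unfold leb_R.
    destruct (Rle_dec (INR n) X); intuition discriminate. }
  assert (KN : (K <= N)%nat)
    by (pose proof (filter_length_le (leb_R X) (seq 1 N)) as L; rewrite length_seq in L; exact L).
  split.
  - destruct K as [|k]; [simpl; lra|].
    apply mem; [apply in_seq; lia | apply in_seq; lia].
  - destruct (Nat.eq_dec K N) as [->|KN'].
    + lra.
    + destruct (Rlt_le_dec X (INR K + 1)) as [|H]; [assumption|].
      exfalso. rewrite <- S_INR in H.
      apply (proj2 (mem (S K) ltac:(apply in_seq; lia))) in H. apply in_seq in H. lia.
Qed.

Lemma avg_abs_expsum gamma N p K :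
  filter (leb_R (Rpower (INR N) gamma)) (seq 1 N) = seq 1 K ->
  avg_abs gamma N p = sumR (seq 0 p) (fun x => Cmod (expsum fib (seq 1 K) p x)) / INR p.
Proof.
  intros E.
  change (avg_abs gamma N p) with (/ INR p * sumR (seq 0 p)
    (fun x => Cmod (expsum fib (filter (leb_R (Rpower (INR N) gamma)) (seq 1 N)) p x))).
  rewrite E. unfold Rdiv. ring.
Qed.

Lemma Rpower_half x g : 0 < x -> Rpower x (g / 2) = sqrt (Rpower x g).
Proof. intros Hx. rewrite <- Rpower_sqrt by apply exp_pos. rewrite Rpower_mult. f_equal. Qed.

Lemma good_fib_prime gamma N p K : (1 <= N)%nat ->
  filter (leb_R (Rpower (INR N) gamma)) (seq 1 N) = seq 1 K ->
  2 <= Rpower (INR N) gamma < INR K + 1 -> INR K <= Rpower (INR N) gamma -> isprime p = true ->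
  bad_pairs fib (seq 1 K) p <= INR K -> bad_quads fib (seq 1 K) p <= INR K ^ 2 ->
  good gamma (1 / 6) 2 N p = true.
Proof.
  intros HN E [X2 XK] KX Pp bad2 bad4.
  assert (p_pos : (0 < p)%nat) by (apply isprime_spec in Pp; destruct Pp; lia).
  assert (HK : (1 <= K)%nat) by (destruct K; [simpl in XK; lra | lia]).
  pose proof (fib_expsum_mean_bounds p K p_pos HK bad2 bad4) as M. cbv zeta in M.
  unfold good. rewrite (avg_abs_expsum _ _ _ _ E), Rpower_half by (apply lt_0_INR; lia).
  set (X := Rpower (INR N) gamma) in *.
  set (m := sumR (seq 0 p) (fun x => Cmod (expsum fib (seq 1 K) p x)) / INR p) in *.
  assert (m_ge0 : 0 <= m).
  { apply Rdiv_le_0_compat; [apply sumR_nonneg; intros; apply Cmod_ge_0 | apply lt_0_INR; lia]. }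
  pose proof (sqrt_sqrt X ltac:(lra)). pose proof (sqrt_pos X).
  destruct (Rle_dec (1 / 6 * sqrt X) m) as [|lo]; [destruct (Rle_dec m (2 * sqrt X)) as [|hi]|].
  - reflexivity.
  - exfalso. apply hi. nra.
  - exfalso. apply lo. nra.
Qed.

Lemma count_bad_fib_primes_le K N : (1 <= K)%nat ->
  sumR (seq 0 (S N)) (fun p => b2R (isprime p && exceeds (INR K) (bad_pairs fib (seq 1 K) p)))
  + sumR (seq 0 (S N))
      (fun p => b2R (isprime p && exceeds (INR K ^ 2) (bad_quads fib (seq 1 K) p)))
  <= 3 * INR K ^ 3.
Proof.
  intros HK. assert (KR : 1 <= INR K) by (apply (le_INR 1); lia).
  assert (fib_le : forall n, In n (seq 1 K) -> (fib n <= 2 ^ K)%nat).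
  { intros n Hn. apply in_seq in Hn. pose proof (fib_le_pow2 n).
    pose proof (Nat.pow_le_mono_r 2 n K ltac:(lia) ltac:(lia)). lia. }
  pose proof (sumR_primes_bad_pairs_le fib (seq 1 K) K fib_le N) as P2.
  pose proof (sumR_primes_bad_quads_le fib (seq 1 K) K fib_le N) as P4.
  rewrite length_seq, S_INR in *.
  pose proof (sumR_b2R_exceeds_le (seq 0 (S N)) isprime (bad_pairs fib (seq 1 K)) (INR K)
    ltac:(lra) (fun p _ => sumR_nonneg _ _ (fun n _ => sumR_nonneg _ _ (fun m _ => b2R_nonneg _))))
    as M2.
  pose proof (sumR_b2R_exceeds_le (seq 0 (S N)) isprime (bad_quads fib (seq 1 K)) (INR K ^ 2)
    ltac:(nra) (fun p _ => sumR_nonneg _ _ (fun a _ => sumR_nonneg _ _ (fun b _ =>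
      sumR_nonneg _ _ (fun c _ => sumR_nonneg _ _ (fun d _ => b2R_nonneg _)))))) as M4.
  assert (S2 : sumR (seq 0 (S N))
      (fun p => b2R (isprime p && exceeds (INR K) (bad_pairs fib (seq 1 K) p))) <= INR K ^ 2)
    by (apply Rmult_le_reg_l with (INR K); [lra|]; lra).
  assert (S4 : sumR (seq 0 (S N))
      (fun p => b2R (isprime p && exceeds (INR K ^ 2) (bad_quads fib (seq 1 K) p)))
      <= INR K ^ 2 * (INR K + 1))
    by (apply Rmult_le_reg_l with (INR K ^ 2); [nra|]; lra).
  nra.
Qed.

Lemma good_count_le_prime_pi gamma c1 c2 N : (good_count gamma c1 c2 N <= prime_pi N)%nat.
Proof.
  unfold good_count, prime_pi. induction (seq 0 (S N)) as [|p l IH]; [simpl; lia|].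
  simpl. destruct (isprime p), (good gamma c1 c2 N p); simpl; lia.
Qed.

Lemma b2R_cover (g a b : bool) :
  (a = false -> b = false -> g = true) -> b2R true <= b2R g + (b2R a + b2R b).
Proof. destruct g, a, b; simpl; intros H; try lra; discriminate (H eq_refl eq_refl). Qed.

Lemma prime_pi_le_good_count gamma N : 0 < gamma < 1 -> (2 <= N)%nat ->
  2 <= Rpower (INR N) gamma ->
  INR (prime_pi N) <= INR (good_count gamma (1 / 6) 2 N) + 3 * Rpower (INR N) gamma ^ 3.
Proof.
  intros Hg HN X2. set (X := Rpower (INR N) gamma) in *.
  assert (XN : X < INR N).
  { assert (1 < INR N) by (apply (lt_INR 1); lia).
    unfold X. rewrite <- (Rpower_1 (INR N)) at 2 by lra. apply Rpower_lt; lra. }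
  destruct (filter_leb_R_seq X N ltac:(lra)) as [K [E [KX XK]]].
  assert (HK : (1 <= K)%nat) by (destruct K; [simpl in XK; lra | lia]).
  pose proof (count_bad_fib_primes_le K N HK) as bad.
  assert (K3 : INR K ^ 3 <= X ^ 3) by (apply pow_incr; split; [apply pos_INR | exact KX]).
  unfold prime_pi, good_count. rewrite <- !sumR_b2R.
  enough (sumR (seq 0 (S N)) (fun p => b2R (isprime p)) <=
    sumR (seq 0 (S N)) (fun p => b2R (isprime p && good gamma (1 / 6) 2 N p))
    + (sumR (seq 0 (S N)) (fun p => b2R (isprime p && exceeds (INR K) (bad_pairs fib (seq 1 K) p)))
       + sumR (seq 0 (S N))
           (fun p => b2R (isprime p && exceeds (INR K ^ 2) (bad_quads fib (seq 1 K) p)))))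
    by lra.
  rewrite <- !sumR_plus. apply sumR_le. intros p _.
  destruct (isprime p) eqn:Pp; cbn [andb]; [|simpl; lra].
  apply b2R_cover. unfold exceeds.
  destruct (Rle_dec (bad_pairs fib (seq 1 K) p) (INR K)) as [b2|]; [|discriminate].
  destruct (Rle_dec (bad_quads fib (seq 1 K) p) (INR K ^ 2)) as [b4|]; [|discriminate].
  intros _ _. exact (good_fib_prime gamma N p K ltac:(lia) E (conj X2 XK) KX Pp b2 b4).
Qed.

Lemma prime_pi_le_mono M N : (M <= N)%nat -> (prime_pi M <= prime_pi N)%nat.
Proof.
  intros H. unfold prime_pi. replace (S N) with (S M + (N - M))%nat by lia.
  rewrite seq_app, filter_app, length_app. lia.
Qed.

Lemma prime_pi_ge_Chebyshev N : (2 <= N)%nat -> ln 2 * INR N <= 4 * ln (INR N) * INR (prime_pi N).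
Proof.
  intros HN. set (n := Nat.div N 2).
  assert (Hn : (1 <= n /\ 2 * n <= N <= 2 * n + 1)%nat)
    by (unfold n; pose proof (Nat.div_mod N 2 ltac:(lia));
        pose proof (Nat.mod_upper_bound N 2 ltac:(lia)); lia).
  pose proof (Chebyshev.pow2_le_pow_prime_pi_nat n ltac:(lia)) as C.
  apply le_INR in C. rewrite !pow_INR in C.
  apply ln_le in C; [|apply pow_lt; simpl; lra].
  rewrite !ln_pow in C by (apply lt_0_INR; lia).
  assert (Pmono := le_INR _ _ (prime_pi_le_mono (2 * n) N ltac:(lia))).
  assert (E2n : 2 <= INR (2 * n)) by (apply (le_INR 2); lia).
  assert (Lmono : ln (INR (2 * n)) <= ln (INR N)) by (apply ln_le; [lra | apply le_INR; lia]).
  assert (Lpos : 0 < ln (INR (2 * n))) by (rewrite <- ln_1; apply ln_increasing; lra).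
  assert (L2 : 0 < ln 2) by (rewrite <- ln_1; apply ln_increasing; lra).
  assert (NR : INR N <= 4 * INR n).
  { assert (N <= 4 * n)%nat by lia. apply le_INR in H. rewrite mult_INR in H.
    replace (INR 4) with 4 in H by (simpl; ring). exact H. }
  change (INR 2) with 2 in C. pose proof (pos_INR (prime_pi (2 * n))).
  assert (INR n * ln 2 <= INR (prime_pi N) * ln (INR N)) by nra.
  nra.
Qed.

Lemma prime_pi_pos N : (2 <= N)%nat -> 0 < INR (prime_pi N).
Proof.
  intros HN. pose proof (prime_pi_ge_Chebyshev N HN) as Cheb.
  assert (0 < ln 2) by (rewrite <- ln_1; apply ln_increasing; lra).
  assert (2 <= INR N) by (apply (le_INR 2); exact HN).
  destruct (Req_dec (INR (prime_pi N)) 0) as [E|E]; [rewrite E in Cheb; nra|].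
  pose proof (pos_INR (prime_pi N)). lra.
Qed.

Lemma mul_ln_lt_Rpower d y : 0 < y -> d * ln y < Rpower y d.
Proof.
  intros Hy. rewrite <- ln_Rpower. set (z := Rpower y d).
  assert (0 < z) by apply exp_pos. pose proof (exp_ineq1_le (ln z)). rewrite exp_ln in *; lra.
Qed.

Lemma eventually_Rpower_ge gamma B : 0 < gamma -> 0 < B ->
  exists N0, forall N, (N0 <= N)%nat -> B <= Rpower (INR N) gamma.
Proof.
  intros Hg HB. set (r := Rpower B (/ gamma)).
  assert (rp : 0 < r) by apply exp_pos.
  destruct (archimed r) as [up_r _].
  exists (Z.to_nat (up r)). intros N HN.
  assert (r < INR N).
  { apply Rlt_le_trans with (INR (Z.to_nat (up r))); [|apply le_INR; exact HN].
    rewrite INR_IZR_INZ, Z2Nat.id; [lra | apply le_IZR; lra]. }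
  replace B with (Rpower r gamma)
    by (unfold r; rewrite Rpower_mult, Rinv_l, Rpower_1; lra).
  apply Rle_Rpower_l; lra.
Qed.

Lemma is_lim_seq_Rpower_neg d : 0 < d -> is_lim_seq (fun N => Rpower (INR N) (- d)) 0.
Proof.
  intros Hd. apply is_lim_seq_spec. intros eps.
  destruct (eventually_Rpower_ge d (2 / eps) Hd) as [N0 HN0].
  { apply Rdiv_lt_0_compat; [lra | apply cond_pos]. }
  exists (S N0). intros N HN. specialize (HN0 N ltac:(lia)).
  pose proof (cond_pos eps).
  assert (P : 0 < Rpower (INR N) d) by apply exp_pos.
  rewrite Rpower_Ropp, Rminus_0_r, Rabs_right by (left; apply Rinv_0_lt_compat; exact P).
  apply Rmult_lt_reg_l with (Rpower (INR N) d); [exact P|]. rewrite Rinv_r by lra.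
  assert (2 <= Rpower (INR N) d * eps).
  { apply Rmult_le_reg_r with (/ eps); [apply Rinv_0_lt_compat; lra|].
    rewrite Rmult_assoc, Rinv_r, Rmult_1_r by lra. exact HN0. }
  lra.
Qed.

Lemma cube_Rpower_le_prime_pi gamma d N : 0 < d -> 3 * gamma + 2 * d = 1 -> (2 <= N)%nat ->
  3 * Rpower (INR N) gamma ^ 3 <= 12 / (d * ln 2) * Rpower (INR N) (- d) * INR (prime_pi N).
Proof.
  intros d_pos Hgd HN.
  assert (NR : 2 <= INR N) by (apply (le_INR 2); exact HN).
  assert (L2 : 0 < ln 2) by (rewrite <- ln_1; apply ln_increasing; lra).
  assert (LN : 0 < ln (INR N)) by (rewrite <- ln_1; apply ln_increasing; lra).
  pose proof (prime_pi_ge_Chebyshev N HN) as Cheb.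
  pose proof (mul_ln_lt_Rpower d (INR N) ltac:(lra)) as lnN.
  set (X := Rpower (INR N) gamma). set (Y := Rpower (INR N) (- d)).
  set (A := Rpower (INR N) d) in *.
  assert (Y0 : 0 < Y) by apply exp_pos. assert (A0 : 0 < A) by apply exp_pos.
  assert (XA : X ^ 3 * A = INR N * Y).
  { unfold X, A, Y. rewrite <- Rpower_pow by apply exp_pos.
    rewrite Rpower_mult, <- Rpower_plus.
    rewrite <- (Rpower_1 (INR N)) at 2 by lra. rewrite <- Rpower_plus. f_equal. simpl INR. lra. }
  pose proof (pos_INR (prime_pi N)) as P0. set (P := INR (prime_pi N)) in *.
  apply Rmult_le_reg_r with (A * (d * ln 2));
    [apply Rmult_lt_0_compat; [exact A0 | apply Rmult_lt_0_compat; lra]|].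
  replace (3 * X ^ 3 * (A * (d * ln 2))) with (3 * Y * (ln 2 * INR N) * d)
    by (transitivity (3 * (X ^ 3 * A) * d * ln 2); [rewrite XA; ring | ring]).
  replace (12 / (d * ln 2) * Y * P * (A * (d * ln 2))) with (3 * Y * (4 * P) * A) by (field; lra).
  apply Rle_trans with (3 * Y * (4 * ln (INR N) * P) * d).
  - apply Rmult_le_compat_r; [lra|]. apply Rmult_le_compat_l; [lra | exact Cheb].
  - replace (3 * Y * (4 * ln (INR N) * P) * d) with (12 * Y * P * (d * ln (INR N))) by ring.
    replace (3 * Y * (4 * P) * A) with (12 * Y * P * A) by ring.
    apply Rmult_le_compat_l; [apply Rmult_le_pos; lra | lra].
Qed.

Theorem theorem6 (gamma : R) :
  0 < gamma < 1 / 3 ->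
  exists c1 c2 : R, 0 < c1 /\ 0 < c2 /\
    is_lim_seq (fun N : nat => INR (good_count gamma c1 c2 N) / INR (prime_pi N)) 1.
Proof.
  intros [g0 g1]. exists (1 / 6), 2. split; [lra|]. split; [lra|].
  set (d := (1 - 3 * gamma) / 2). assert (d_pos : 0 < d) by (unfold d; lra).
  set (c := 12 / (d * ln 2)).
  apply (is_lim_seq_le_le_loc (fun N => 1 - c * Rpower (INR N) (- d)) _ (fun _ => 1));
    [| | apply is_lim_seq_const].
  - destruct (eventually_Rpower_ge gamma 2 g0 ltac:(lra)) as [N1 HN1].
    exists (Nat.max 2 N1). intros N HN.
    pose proof (prime_pi_le_good_count gamma N ltac:(lra) ltac:(lia) (HN1 N ltac:(lia))) as lo.
    pose proof (cube_Rpower_le_prime_pi gamma d N d_pos ltac:(unfold d; lra) ltac:(lia)) as bad.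
    pose proof (le_INR _ _ (good_count_le_prime_pi gamma (1 / 6) 2 N)) as hi.
    pose proof (prime_pi_pos N ltac:(lia)) as P0.
    fold c in bad. split; apply Rmult_le_reg_r with (INR (prime_pi N)); try exact P0;
      unfold Rdiv; rewrite Rmult_assoc, Rinv_l, Rmult_1_r by lra; lra.
  - pose proof (is_lim_seq_scal_l _ c _ (is_lim_seq_Rpower_neg d d_pos)) as lim.
    pose proof (is_lim_seq_minus' _ _ 1 (c * 0) (is_lim_seq_const 1) lim) as lim'.
    rewrite Rmult_0_r, Rminus_0_r in lim'. exact lim'.
Qed.
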